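(* Let $E$ be a finite directed graph with no sinks, $Z$ a weight sequence and $p\ge1$. Then $Z$ satisfies Condition A(p) if and only if $u_\alpha z=zu_\alpha$ for every path $\alpha$ with $|\alpha|=p$. In that case also $u_\alpha^*z=zu_\alpha^*$ for every path $\alpha$ with $|\alpha|=p$.
   Context: Graph conventions: $E=(E^0,E^1,s,r)$ finite directed graph; paths $\alpha=e_1\cdots e_k$ with $s(e_j)=r(e_{j+1})$, $|\alpha|=k$. Fock setup: $A=C(E^0)$, $X_E$ the graph correspondence over $A$; $X_E^{\otimes k}$ has basis $\{\delta_\alpha:|\alpha|=k\}$ with $\delta_\alpha\otimes\delta_\beta=\delta_{\alpha\beta}$ if $s(\alpha)=r(\beta)$, else $0$. $\mathcal{F}(X_E)=\bigoplus_kX_E^{\otimes k}$, $\mathcal{K}$ compacts, $S_e\delta_\beta=\delta_{e\beta}$ (or $0$). Weight sequence $Z=\{Z_k\}$ ($Z_k$ adjointable on $X_E^{\otimes k}$, commuting with left $A$-action, $Z_0=I$, uniformly bounded, positive invertible, $Z_k\ge\epsilon I$ for $k\ge1$), $Z=\mathrm{diag}(Z_k)$; $q$ the quotient modulo $\mathcal{K}$; $u_e=q(S_e)$, $u_\alpha=u_{e_1}\cdots u_{e_k}$, $z=q(Z)$. Condition A(p): $\lim_{k\to\infty}\|I_p\otimes Z_k-Z_{k+p}\|=0$, where $(I_p\otimes Z_k)\delta_{\beta\gamma}=\delta_\beta\otimes Z_k\delta_\gamma$ for $|\beta|=p$, $|\gamma|=k$. *)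

From mathcomp Require Import all_boot all_algebra.
From mathcomp Require Import complex.
From mathcomp Require Import reals.
Set Implicit Arguments.
Unset Strict Implicit.
Unset Printing Implicit Defensive.
Import GRing.Theory Num.Theory.
Local Open Scope ring_scope.
Local Open Scope complex_scope.

Section GraphFock.
Variables (R : realType) (E0 E1 : finType) (src rg : E1 -> E0).

Local Notation C := R[i].

(* A path alpha = e_1 ... e_k (with src e_j = rg e_(j+1)) is represented by
   the pair (s(alpha), [:: e_1; ...; e_k]); a path of length 0 is a vertex
   (v, [::]).  Arbitrary pairs are allowed as elements of the type, validity
   is the predicate [is_path]. *)
Definition Path := (E0 * seq E1)%type.

Definition is_path (a : Path) : bool :=
  match a.2 with
  | [::] => true
  | e :: t => path (fun x y => src x == rg y) e t && (src (last e t) == a.1)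
  end.

Definition plen (a : Path) : nat := size a.2.
Definition psrc (a : Path) : E0 := a.1.
Definition prng (a : Path) : E0 := if a.2 is e :: _ then rg e else a.1.
(* concatenation alpha beta (meaningful when psrc alpha = prng beta) *)
Definition pcat (a b : Path) : Path := (b.1, a.2 ++ b.2).
Definition pdrop (p : nat) (d : Path) : Path := (d.1, drop p d.2).
Definition ptake (p : nat) (d : Path) : Path := (prng (pdrop p d), take p d.2).

Definition kpath (k : nat) := (E0 * k.-tuple E1)%type.
Definition kp (k : nat) (g : kpath k) : Path := (g.1, val g.2).

(* vectors of the Fock module: coefficient functions on paths
   (x = sum_alpha x(alpha) delta_alpha) *)
Definition Vec := Path -> C.

Definition sqn (z : C) : R := Normc.normc z ^+ 2.

Definition ract (x : Vec) (a : E0 -> C) : Vec := fun d => x d * a (psrc d).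
Definition lact (a : E0 -> C) (x : Vec) : Vec := fun d => a (prng d) * x d.

Definition kinnerA (k : nat) (x y : Vec) (v : E0) : C :=
  \sum_(g : kpath k | is_path (kp g) && (psrc (kp g) == v))
     conjc (x (kp g)) * y (kp g).

(* squared Hilbert norm of the degree-k part of x *)
Definition knorm (k : nat) (x : Vec) : R :=
  \sum_(g : kpath k | is_path (kp g)) sqn (x (kp g)).

(* an operator on X_E^{(x) k} given by its matrix W k d g (d, g of length k) *)
Definition wact (W : nat -> Path -> Path -> C) (k : nat) (x : Vec) : Vec :=
  fun d => \sum_(g : kpath k | is_path (kp g)) W k d (kp g) * x (kp g).

(* (I_p (x) Z_k) on X_E^{(x)(p+k)} : delta_beta (x) delta_gamma |->
   delta_beta (x) Z_k delta_gamma *)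
Definition tact (Z : nat -> Path -> Path -> C) (p k : nat) (x : Vec) : Vec :=
  fun d => \sum_(g : kpath k | is_path (kp g) && (prng (kp g) == prng (pdrop p d)))
             Z k (pdrop p d) (kp g) * x (pcat (ptake p d) (kp g)).

Definition eqk (k : nat) (x y : Vec) : Prop :=
  forall d, is_path d -> plen d = k -> x d = y d.

Definition weight_seq (Z : nat -> Path -> Path -> C) : Prop :=
  (forall k, exists W : nat -> Path -> Path -> C,
      forall x y v, kinnerA k (wact Z k x) y v = kinnerA k x (wact W k y) v)
  /\ (forall k a x, eqk k (wact Z k (lact a x)) (lact a (wact Z k x)))
  /\ (forall x, eqk 0 (wact Z 0 x) x)
  /\ (exists M : R, forall k x, knorm k (wact Z k x) <= M * knorm k x)
  /\ (forall k x v, 0 <= kinnerA k x (wact Z k x) v)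
  /\ (forall k, exists W : nat -> Path -> Path -> C,
        forall x, eqk k (wact W k (wact Z k x)) x /\ eqk k (wact Z k (wact W k x)) x)
  /\ (exists eps : R, 0 < eps /\
        forall k, (1 <= k)%N -> forall x v,
          (eps%:C * kinnerA k x x v <= kinnerA k x (wact Z k x) v)).

Definition condA (Z : nat -> Path -> Path -> C) (p : nat) : Prop :=
  forall eps : R, 0 < eps -> exists N : nat, forall k : nat, (N <= k)%N ->
    forall x : Vec,
      knorm (k + p) (fun d => tact Z p k x d - wact Z (k + p) x d)
        <= eps * knorm (k + p) x.

(* ||x||^2 <= c (sup of finite partial sums of |x(d)|^2) *)
Definition l2le (x : Vec) (c : R) : Prop :=
  forall s : seq Path, uniq s -> \sum_(d <- s) sqn (x d) <= c.

Definition l2 (x : Vec) : Prop :=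
  (forall d, ~~ is_path d -> x d = 0) /\ exists c : R, l2le x c.

Definition Op := Vec -> Vec.

Definition bounded_op (T : Op) : Prop :=
  (forall x, l2 x -> l2 (T x))
  /\ (forall (a : C) x y, l2 x -> l2 y ->
        T (fun d => a * x d + y d) = (fun d => a * T x d + T y d))
  /\ (exists M : R, forall x c, l2 x -> l2le x c -> l2le (T x) (M * c)).

Definition modmap (T : Op) : Prop :=
  forall x a, l2 x -> T (ract x a) = ract (T x) a.

Definition finite_rank (T : Op) : Prop :=
  exists n (v : 'I_n -> Vec), (forall i, l2 (v i)) /\
    forall x, l2 x -> exists c : 'I_n -> C, T x = (fun d => \sum_i c i * v i d).

Definition compact_op (T : Op) : Prop :=
  bounded_op T /\
  forall eps : R, 0 < eps -> exists F : Op,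
    bounded_op F /\ modmap F /\ finite_rank F /\
    forall x c, l2 x -> l2le x c -> l2le (fun d => T x d - F x d) (eps * c).

Definition Zop (Z : nat -> Path -> Path -> C) : Op :=
  fun x d => if is_path d then wact Z (plen d) x d else 0.

(* S_alpha delta_gamma = delta_(alpha gamma) (or 0) *)
Definition Sop (a : Path) : Op :=
  fun x d =>
    if is_path d && (take (plen a) d.2 == a.2)
       && (prng (pdrop (plen a) d) == psrc a)
    then x (pdrop (plen a) d) else 0.

(* S_alpha^* delta_(alpha gamma) = delta_gamma, S_alpha^* delta_beta = 0 otherwise *)
Definition Sadj (a : Path) : Op :=
  fun x d => if is_path d && (prng d == psrc a) then x (pcat a d) else 0.

Definition opsub (T U : Op) : Op := fun x d => T x d - U x d.
Definition opcomp (T U : Op) : Op := fun x => T (U x).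

(* q(T) = q(U) in L(F)/K  iff  T - U is compact *)
Definition eq_modK (T U : Op) : Prop := compact_op (opsub T U).

Definition no_sinks : Prop := forall v : E0, exists e : E1, src e = v.

End GraphFock.

From Pilot Require Import Defs.
From mathcomp Require Import all_boot all_order all_algebra.
From mathcomp Require Import complex reals boolp.
From mathcomp Require Import ring zify.
Import Order.TTheory GRing.Theory Num.Theory.
Local Open Scope ring_scope.

(* Split everything by path length.  The weights are local: [Z_k d g = 0] unless
   [d] and [g] have the same source and the same range.  Hence on paths of length
   [k + p] the commutator [S_a Z - Z S_a] acts as [(I_p (x) Z_k - Z_(k+p)) S_a], and on
   paths of length [m] the commutator [S_a^* Z - Z S_a^*] acts as
   [S_a^* (Z_(m+p) - I_p (x) Z_m)].  An operator moving the length by [p] is compact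
   as soon as its blocks between consecutive lengths tend to 0 in norm (truncating
   its input to short paths gives finite-rank approximants), so Condition A(p) makes
   both commutators compact.  Conversely, the blocks of such a compact operator tend
   to 0, and on length [k + p] we have
   [I_p (x) Z_k - Z_(k+p) = sum_(|b| = p) (S_b Z - Z S_b) S_b^*], a finite sum of
   such blocks composed with contractions; this is Condition A(p). *)

Lemma ler_sum_subset (R : numDomainType) (T : eqType) (s t : seq T) (F : T -> R) :
  uniq s -> uniq t -> {subset s <= t} -> {in t, forall i, 0 <= F i} ->
  \sum_(i <- s) F i <= \sum_(i <- t) F i.
Proof.
move=> Us Ut st F0.
rewrite [X in _ <= X](bigID (mem s)) /=.
have -> : \sum_(i <- t | i \in s) F i = \sum_(i <- s) F i.
  rewrite -big_filter; apply: perm_big; apply: uniq_perm; rewrite ?filter_uniq //.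
  by move=> x; rewrite mem_filter; apply/andP/idP => [[]//|xs]; split; last exact: st.
by rewrite lerDl big_seq_cond sumr_ge0 // => i /andP[/F0].
Qed.

Lemma ler_sum_inj (R : numDomainType) (T U : eqType) (s : seq T) (t : seq U)
    (f : T -> R) (h : T -> U) (F : U -> R) :
  uniq s -> uniq t -> {in t, forall j, 0 <= F j} ->
  (forall i, i \in s -> f i != 0 -> h i \in t /\ f i <= F (h i)) ->
  {in [seq i <- s | f i != 0] &, injective h} ->
  \sum_(i <- s) f i <= \sum_(j <- t) F j.
Proof.
move=> Us Ut F0 hf hinj.
rewrite (bigID (fun i => f i != 0)) /= [X in _ + X]big1 ?addr0; last first.
  by move=> i /negPn/eqP.
rewrite -big_filter.
apply: (@le_trans _ _ (\sum_(i <- [seq i <- s | f i != 0]) F (h i))).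
  rewrite big_seq [X in _ <= X]big_seq; apply: ler_sum => i.
  by rewrite mem_filter => /andP[fi si]; case: (hf i si fi).
rewrite -(big_map h xpredT); apply: ler_sum_subset => //.
  by rewrite map_inj_in_uniq ?filter_uniq.
move=> j; case/mapP => i; rewrite mem_filter => /andP[fi si] ->.
by case: (hf i si fi).
Qed.

Lemma eventually_all (T : eqType) (s : seq T) (P : T -> nat -> Prop) :
  (forall b, b \in s -> exists N, forall k, (N <= k)%N -> P b k) ->
  exists N, forall b, b \in s -> forall k, (N <= k)%N -> P b k.
Proof.
elim: s => [|b s IH] Hs; first by exists 0%N => b; rewrite in_nil.
have [N1 H1] := Hs b (mem_head b s).
have [|N2 H2] := IH; first by move=> c cs; apply: Hs; rewrite inE cs orbT.
exists (maxn N1 N2) => c; rewrite inE => /orP[/eqP-> | cs] k; rewrite geq_max.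
  by case/andP=> k1 _; apply: H1.
by case/andP=> _ k2; apply: H2.
Qed.

Lemma frequently_inj (P : nat -> Prop) :
  (forall N, exists k, (N <= k)%N /\ P k) ->
  exists2 f : nat -> nat, injective f & forall j, P (f j).
Proof.
move=> /choice[g Hg].
pose f j := g (iter j (fun N => (g N).+1) 0%N).
have f_lt : {homo f : i j / (i < j)%N}.
  by apply: homo_ltn => [? ? ? /ltn_trans | j]; [apply | exact: (Hg _).1].
exists f => [i j fij|j]; last exact: (Hg _).2.
by case: (ltngtP i j) => // /f_lt; rewrite fij ltnn.
Qed.

Lemma exists_linear_relation (F : fieldType) n (c : 'I_n.+1 -> 'I_n -> F) :
  exists lam : 'I_n.+1 -> F, (exists j, lam j != 0) /\
    forall i, \sum_j lam j * c j i = 0.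
Proof.
pose A : 'M[F]_(n.+1, n) := \matrix_(j, i) c j i.
have : kermx A != 0.
  rewrite kermx_eq0 /row_free; apply/negP => /eqP rkA.
  by have := rank_leq_col A; rewrite rkA ltnn.
case/matrix0Pn => r [j Hj]; exists (kermx A r); split; first by exists j.
move=> i; have := congr1 (fun B : 'M[F]_(n.+1, n) => B r i) (mulmx_ker A).
rewrite !mxE => H; apply: etrans H; apply: eq_bigr => k _; by rewrite [A k i]mxE.
Qed.

Section SquaredModulus.
Variable R : realType.
Implicit Types u v z : R[i].

Lemma normc_ge0 z : 0 <= Normc.normc z.
Proof. by case: z => a b; exact: sqrtr_ge0. Qed.

Lemma sqn_ge0 z : 0 <= sqn z.
Proof. by rewrite /sqn exprn_ge0 ?normc_ge0. Qed.

Lemma sqn0 : sqn (0 : R[i]) = 0.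
Proof. by rewrite /sqn Normc.normc0 expr0n. Qed.

Lemma sqn_eq0 z : (sqn z == 0) = (z == 0).
Proof.
apply/idP/eqP => [|->]; last by rewrite sqn0.
by rewrite /sqn expf_eq0 /= => /eqP/Normc.eq0_normc.
Qed.

Lemma sqnM u v : sqn (u * v) = sqn u * sqn v.
Proof. by rewrite /sqn Normc.normcM exprMn. Qed.

Lemma sqnN z : sqn (- z) = sqn z.
Proof. by rewrite /sqn normcN. Qed.

Lemma ler_sqnD u v : sqn (u + v) <= 2 * (sqn u + sqn v).
Proof.
rewrite /sqn; apply: (@le_trans _ _ ((Normc.normc u + Normc.normc v) ^+ 2)).
  by rewrite ler_pXn2r ?nnegrE ?addr_ge0 ?normc_ge0 ?le_normcD.
rewrite -subr_ge0 (_ : _ - _ = (Normc.normc u - Normc.normc v) ^+ 2) ?sqr_ge0 //.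
by rewrite !expr2; ring.
Qed.

Lemma ler_sqnB u v : sqn (u - v) <= 2 * (sqn u + sqn v).
Proof. by rewrite -(sqnN v) ler_sqnD. Qed.

Lemma ler_sqn_sum (I : Type) (s : seq I) (z : I -> R[i]) :
  sqn (\sum_(i <- s) z i) <= 2 ^+ size s * \sum_(i <- s) sqn (z i).
Proof.
elim: s => [|i s IH]; first by rewrite !big_nil sqn0 mulr0.
rewrite !big_cons /= exprS -mulrA; apply: le_trans (ler_sqnD _ _) _.
rewrite ler_wpM2l // mulrDr lerD // ler_peMl ?sqn_ge0 //.
by rewrite exprn_ege1 // ler1n.
Qed.

End SquaredModulus.

(** * Paths and degree-wise norms *)

Section Fock.
Variables (R : realType) (E0 E1 : finType) (src rg : E1 -> E0).
Local Notation C := R[i].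
Local Notation Path := (Path E0 E1).
Local Notation Vec := (Vec R E0 E1).
Local Notation Op := (Op R E0 E1).
Local Notation is_path := (is_path src rg).
Local Notation knorm := (@knorm R E0 E1 src rg).
Local Notation prng := (@prng E0 E1 rg).
Local Notation ptake := (@ptake E0 E1 rg).
Local Notation l2 := (l2 src rg).
Local Notation Sop := (Sop src rg).
Local Notation Sadj := (Sadj src rg).
Implicit Types (a b d g : Path) (x y : Vec) (T : Op).
Implicit Type p : nat.

Lemma is_path_cat v (s1 s2 : seq E1) :
  is_path (v, s1 ++ s2) = is_path (prng (v, s2), s1) && is_path (v, s2).
Proof.
case: s1 => [|f u] //=; case: s2 => [|e t] /=; first by rewrite cats0 andbT.
by rewrite /is_path /Defs.prng /= cat_path last_cat /= -!andbA.
Qed.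

Lemma is_path_pdrop p d : is_path d -> is_path (pdrop p d).
Proof. by case: d => v s; rewrite -{1}(cat_take_drop p s) is_path_cat => /andP[]. Qed.

Lemma is_path_ptake p d : is_path d -> is_path (ptake p d).
Proof. by case: d => v s; rewrite -{1}(cat_take_drop p s) is_path_cat => /andP[]. Qed.

Lemma is_path_pcat a g : is_path a -> is_path g -> psrc a = prng g -> is_path (pcat a g).
Proof. by case: a => va sa; case: g => vg sg Ha Hg Hs; rewrite /pcat is_path_cat -Hs Ha Hg. Qed.

Lemma pcat_take_drop p d : pcat (ptake p d) (pdrop p d) = d.
Proof. by case: d => v s; rewrite /pcat /= cat_take_drop. Qed.

Lemma plen_pcat a g : plen (pcat a g) = (plen a + plen g)%N.
Proof. exact: size_cat. Qed.

Lemma plen_pdrop p d : plen (pdrop p d) = (plen d - p)%N.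
Proof. exact: size_drop. Qed.

Lemma plen_ptake p d : (p <= plen d)%N -> plen (ptake p d) = p.
Proof. by move=> H; rewrite /plen /ptake /= size_take; case: ltngtP H. Qed.

Lemma pdrop_pcat p a g : plen a = p -> pdrop p (pcat a g) = g.
Proof. by case: g => v s <-; rewrite /pdrop /pcat /= drop_size_cat. Qed.

Lemma ptake_pcat p a g : plen a = p -> ptake p (pcat a g) = (prng g, a.2).
Proof. by move=> Ha; rewrite /ptake pdrop_pcat // /pcat /= take_size_cat. Qed.

(* [0 < p] is needed: only a nonempty edge sequence determines the source vertex. *)
Lemma ptake_path_eq p d a : (0 < p)%N -> is_path d -> is_path a -> plen a = p ->
  take p d.2 = a.2 -> ptake p d = a.
Proof.
move=> p_gt0 Hd; case: a => w [|e t] /= Ha Hl Ht; first by rewrite -Hl in p_gt0.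
have := is_path_ptake p d Hd; rewrite /ptake /= Ht.
move: Ha; rewrite /is_path /= => /andP[_ /eqP <-] /andP[_ /eqP <-] //.
Qed.

Definition lpaths k : seq Path :=
  [seq kp t | t <- index_enum (kpath E0 E1 k) & is_path (kp t)].

Lemma mem_lpaths k d : (d \in lpaths k) = is_path d && (plen d == k).
Proof.
apply/mapP/andP => [[g]|[Hp /eqP Hk]].
  rewrite mem_filter => /andP[Hp _] ->; split => //.
  by rewrite /plen /kp /= size_tuple.
have Hs : size d.2 == k by rewrite -Hk.
exists (d.1, Tuple Hs); last by case: d Hp Hs {Hk}.
by rewrite mem_filter mem_index_enum andbT /kp /=; case: d Hp Hs {Hk}.
Qed.

Lemma uniq_lpaths k : uniq (lpaths k).
Proof.
rewrite map_inj_uniq ?filter_uniq ?index_enum_uniq //.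
by move=> [v1 t1] [v2 t2] [-> /val_inj ->].
Qed.

Lemma big_lpaths (T : Type) (idx : T) (op : T -> T -> T) k (P : pred Path) (F : Path -> T) :
  \big[op/idx]_(g : kpath E0 E1 k | is_path (kp g) && P (kp g)) F (kp g)
  = \big[op/idx]_(d <- lpaths k | P d) F d.
Proof. by rewrite big_map big_filter_cond. Qed.

Lemma knormE k x : knorm k x = \sum_(d <- lpaths k) sqn (x d).
Proof. by rewrite -big_lpaths; apply: eq_bigl => g; rewrite andbT. Qed.

Lemma wactE W k x d : wact src rg W k x d = \sum_(g <- lpaths k) W k d g * x g.
Proof. by rewrite -big_lpaths; apply: eq_bigl => g; rewrite andbT. Qed.

Lemma tactE W p k x d : tact src rg W p k x d =
  \sum_(g <- lpaths k | prng g == prng (pdrop p d)) W k (pdrop p d) g * x (pcat (ptake p d) g).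
Proof. exact: big_lpaths. Qed.

Lemma kinnerAE k x y v : kinnerA src rg k x y v =
  \sum_(g <- lpaths k | psrc g == v) conjc (x g) * y g.
Proof. exact: big_lpaths. Qed.

Lemma knorm_ge0 k x : 0 <= knorm k x.
Proof. by rewrite knormE sumr_ge0 // => d _; apply: sqn_ge0. Qed.

Lemma eq_knorm k x y : {in lpaths k, x =1 y} -> knorm k x = knorm k y.
Proof. by move=> H; rewrite !knormE; apply: eq_big_seq => d /H ->. Qed.

Lemma ler_knorm k x y : {in lpaths k, forall d, sqn (x d) <= sqn (y d)} ->
  knorm k x <= knorm k y.
Proof.
by move=> H; rewrite !knormE big_seq [X in _ <= X]big_seq; apply: ler_sum => d /H.
Qed.

Lemma knorm_eq0 k x : {in lpaths k, forall d, x d = 0} -> knorm k x = 0.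
Proof. by move=> H; rewrite knormE big_seq big1 // => d /H ->; rewrite sqn0. Qed.

Lemma knormZ k (c : C) x : knorm k (fun d => c * x d) = sqn c * knorm k x.
Proof. by rewrite !knormE mulr_sumr; apply: eq_bigr => d _; rewrite sqnM. Qed.

Lemma knormB k x y : knorm k (fun d => x d - y d) <= 2 * (knorm k x + knorm k y).
Proof.
by rewrite !knormE -big_split mulr_sumr /=; apply: ler_sum => d _; exact: ler_sqnB.
Qed.

Lemma knorm_subC k x y : knorm k (fun d => x d - y d) = knorm k (fun d => y d - x d).
Proof. by rewrite !knormE; apply: eq_bigr => d _; rewrite -opprB sqnN. Qed.

Lemma wact_eq0 W k x d : {in lpaths k, forall g, x g = 0} -> wact src rg W k x d = 0.
Proof. by move=> H; rewrite wactE big_seq big1 // => g /H ->; rewrite mulr0. Qed.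

Lemma eq_wact W k x y d : {in lpaths k, x =1 y} ->
  wact src rg W k x d = wact src rg W k y d.
Proof. by move=> H; rewrite !wactE; apply: eq_big_seq => g /H ->. Qed.

Fixpoint paths_below (K : nat) : seq Path :=
  if K is K'.+1 then paths_below K' ++ lpaths K' else [::].

Lemma mem_paths_below K d : (d \in paths_below K) = is_path d && (plen d < K)%N.
Proof.
elim: K => [|K IH] /=; first by rewrite in_nil ltn0 andbF.
rewrite mem_cat IH mem_lpaths [in RHS]ltnS [in RHS]leq_eqVlt -andb_orr.
by rewrite [in RHS]orbC.
Qed.

Lemma uniq_paths_below K : uniq (paths_below K).
Proof.
elim: K => [|K IH] //=; rewrite cat_uniq IH uniq_lpaths andbT /=.
apply/hasPn => d; rewrite mem_lpaths mem_paths_below => /andP[_ /eqP ->].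
by rewrite ltnn andbF.
Qed.

Definition norm_below K x : R := \sum_(0 <= k < K) knorm k x.

Lemma norm_belowE K x : norm_below K x = \sum_(d <- paths_below K) sqn (x d).
Proof.
elim: K => [|K IH]; first by rewrite /norm_below big_geq ?big_nil.
by rewrite /norm_below big_nat_recr //= -/(norm_below K x) IH big_cat knormE.
Qed.

Lemma ler_norm_below K x y : (forall d, sqn (x d) <= sqn (y d)) ->
  norm_below K x <= norm_below K y.
Proof. by move=> H; apply: ler_sum => k _; apply: ler_knorm => d _; apply: H. Qed.

Lemma norm_below_homo K K' x : (K <= K')%N -> norm_below K x <= norm_below K' x.
Proof.
move=> HK; rewrite /norm_below (@big_cat_nat _ _ _ K 0 K') //= lerDl.
by rewrite sumr_ge0 // => k _; apply: knorm_ge0.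
Qed.

Lemma norm_below_shift K p x :
  norm_below (K + p) x = norm_below p x + \sum_(0 <= k < K) knorm (k + p) x.
Proof.
by rewrite /norm_below (@big_cat_nat _ _ _ p) ?leq_addl //= -{2}[p]add0n big_addn addnK.
Qed.

Lemma l2le_norm_below x c : l2le x c -> forall K, norm_below K x <= c.
Proof. by move=> H K; rewrite norm_belowE; apply: H; apply: uniq_paths_below. Qed.

Lemma norm_below_l2le x c : (forall d, ~~ is_path d -> x d = 0) ->
  (forall K, norm_below K x <= c) -> l2le x c.
Proof.
move=> x0 HK s Us; apply: le_trans (HK (\max_(d <- s) plen d).+1).
rewrite norm_belowE; apply: (@ler_sum_inj _ _ _ _ _ _ id) => //.
- exact: uniq_paths_below.
- by move=> j _; apply: sqn_ge0.
- move=> d ds Hn; split => //.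
  rewrite mem_paths_below ltnS (@leq_bigmax_seq _ _ xpredT (@plen E0 E1)) // andbT.
  by apply: contraTT Hn => /x0 ->; rewrite sqn0 eqxx.
Qed.

Lemma l2le_pointwise x y c : (forall d, sqn (x d) <= sqn (y d)) -> l2le y c -> l2le x c.
Proof. by move=> H Hy s Us; apply: le_trans (Hy s Us); apply: ler_sum => d _. Qed.

Definition homog k x := forall d, d \notin lpaths k -> x d = 0.

Lemma homogZ k (c : C) x : homog k x -> homog k (fun d => c * x d).
Proof. by move=> H d Hd; rewrite H ?mulr0. Qed.

Lemma knorm_sum_homog n (e : 'I_n -> nat) (X : 'I_n -> Vec) k :
  injective e -> (forall j, homog (e j) (X j)) ->
  knorm k (fun d => \sum_j X j d) = \sum_j (if e j == k then knorm k (X j) else 0).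
Proof.
move=> e_inj HX; case: (pickP (fun j => e j == k)) => [j0 /eqP ej0|none].
  rewrite (bigD1 j0) //= ej0 eqxx big1 ?addr0; last first.
    by move=> j Hj; case: eqP => // E; case/eqP: Hj; apply: e_inj; rewrite E.
  apply: eq_knorm => d Hd; rewrite (bigD1 j0) //= big1 ?addr0 // => j Hj.
  apply: HX; apply: contra Hj; rewrite !mem_lpaths => /andP[_ /eqP Ed].
  by apply/eqP/e_inj; rewrite -Ed ej0; move: Hd; rewrite mem_lpaths => /andP[_ /eqP].
rewrite big1 => [|j _]; last by rewrite none.
apply: knorm_eq0 => d Hd; rewrite big1 // => j _; apply: HX; apply: contraFN (none j).
by rewrite !mem_lpaths => /andP[_ /eqP <-]; move: Hd; rewrite mem_lpaths => /andP[].
Qed.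

Lemma norm_below_sum_homog n (e : 'I_n -> nat) (X : 'I_n -> Vec) K :
  injective e -> (forall j, homog (e j) (X j)) ->
  norm_below K (fun d => \sum_j X j d) = \sum_(j | (e j < K)%N) knorm (e j) (X j).
Proof.
move=> e_inj HX; rewrite /norm_below [RHS]big_mkcond /=.
under eq_bigr do rewrite (@knorm_sum_homog _ e X _ e_inj HX).
rewrite exchange_big /=; apply: eq_bigr => j _.
case: ltnP => ejK.
  rewrite (bigD1_seq (e j)) ?iota_uniq ?mem_index_iota //= eqxx big1 ?addr0 //.
  by move=> k /negPf; rewrite eq_sym => ->.
rewrite big_seq big1 // => k; rewrite mem_index_iota => /andP[_ kK].
by case: eqP => // ejk; rewrite -ejk ltnNge ejK in kK.
Qed.

Lemma l2le_sum_homog n (e : 'I_n -> nat) (lam : 'I_n -> C) (X : 'I_n -> Vec) :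
  injective e -> (forall j, homog (e j) (X j)) ->
  l2le (fun d => \sum_j lam j * X j d) (\sum_j sqn (lam j) * knorm (e j) (X j)).
Proof.
move=> e_inj HX; apply: norm_below_l2le => [d Hd|K].
  by rewrite big1 // => j _; rewrite (HX j d) ?mulr0 // mem_lpaths negb_and Hd.
rewrite (norm_below_sum_homog _ _ _ _ e_inj (fun j => homogZ _ (lam j) _ (HX j))).
under eq_bigr do rewrite knormZ.
rewrite [X in _ <= X](bigID (fun j => e j < K)%N) /= lerDl.
by rewrite sumr_ge0 // => j _; rewrite mulr_ge0 ?sqn_ge0 ?knorm_ge0.
Qed.

Lemma l2_homog k x : homog k x -> l2 x.
Proof.
have nd d : ~~ is_path d -> d \notin lpaths k by rewrite mem_lpaths negb_and => ->.
move=> Hx; split=> [d /nd/Hx //|]; exists (knorm k x).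
apply: norm_below_l2le => [d /nd/Hx //|K].
have e_inj : injective (fun _ : 'I_1 => k) by move=> i j _; rewrite !ord1.
have := @norm_below_sum_homog 1 (fun _ => k) (fun _ => x) K e_inj (fun _ => Hx).
rewrite (_ : (fun d => _) = x) => [->|]; last by apply: funext => d; rewrite big_ord1.
by rewrite big_mkcond big_ord1 /=; case: ifP => // _; exact: knorm_ge0.
Qed.

Lemma l2_lin (c : C) x y : l2 x -> l2 y -> l2 (fun d => c * x d + y d).
Proof.
move=> [x0 [cx Hx]] [y0 [cy Hy]]; split.
  by move=> d Hd; rewrite x0 // y0 // mulr0 addr0.
exists (2 * (sqn c * cx + cy)) => s Us.
apply: le_trans (_ : \sum_(d <- s) 2 * (sqn c * sqn (x d) + sqn (y d)) <= _).
  by apply: ler_sum => d _; rewrite -sqnM; apply: ler_sqnD.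
rewrite -mulr_sumr ler_wpM2l // big_split /= -mulr_sumr.
by rewrite lerD ?ler_wpM2l ?sqn_ge0 //; [apply: Hx | apply: Hy].
Qed.

Lemma l2_0 : l2 (fun _ : Path => 0 : C).
Proof. by split => //; exists 0 => s _; rewrite big1 // => d _; exact: sqn0. Qed.

Definition delta e : Vec := fun d => if d == e then 1 else 0.

Lemma sum_delta_cond k e (P : pred Path) (F : Path -> C) : e \in lpaths k ->
  \sum_(g <- lpaths k | P g) F g * delta e g = if P e then F e else 0.
Proof.
move=> He; rewrite big_mkcond (bigD1_seq e) ?uniq_lpaths //= big1 ?addr0.
  by rewrite /delta eqxx mulr1.
by move=> g /negPf Hg; rewrite /delta Hg mulr0; case: (P g).
Qed.

Lemma sum_delta k e (F : Path -> C) : e \in lpaths k ->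
  \sum_(g <- lpaths k) F g * delta e g = F e.
Proof. by move=> /(@sum_delta_cond k e xpredT F) <-; rewrite big_mkcond. Qed.

Lemma conjc_delta e d : conjc (delta e d) = delta e d.
Proof. by rewrite /delta; case: (d == e); rewrite ?conjc1 ?conjc0. Qed.

Lemma l2_delta e : is_path e -> l2 (delta e).
Proof.
move=> He; have [k Hk] : exists k, e \in lpaths k by exists (plen e); rewrite mem_lpaths He /=.
apply: (@l2_homog k) => d; rewrite /delta; case: eqP => // ->.
by rewrite Hk.
Qed.

(** * Compact operators shifting the degree *)

Definition op_linear T :=
  forall (c : C) x y, T (fun d => c * x d + y d) = fun d => c * T x d + T y d.
Definition op_l2_linear T := forall (c : C) x y, l2 x -> l2 y ->
  T (fun d => c * x d + y d) = fun d => c * T x d + T y d.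
Definition op_ract T := forall x (f : E0 -> C), T (ract x f) = ract (T x) f.
Definition op_on_paths T := forall x d, ~~ is_path d -> T x d = 0.

Lemma op_linear_sub T U : op_linear T -> op_linear U -> op_linear (opsub T U).
Proof. by move=> HT HU c x y; apply: funext => d; rewrite /opsub HT HU; ring. Qed.

Lemma op_linear_comp T U : op_linear T -> op_linear U -> op_linear (opcomp T U).
Proof. by move=> HT HU c x y; rewrite /opcomp HU HT. Qed.

Lemma op_ract_sub T U : op_ract T -> op_ract U -> op_ract (opsub T U).
Proof. by move=> HT HU x f; apply: funext => d; rewrite /opsub HT HU /ract mulrBl. Qed.

Lemma op_ract_comp T U : op_ract T -> op_ract U -> op_ract (opcomp T U).
Proof. by move=> HT HU x f; rewrite /opcomp HU HT. Qed.

Lemma op_on_paths_sub T U : op_on_paths T -> op_on_paths U -> op_on_paths (opsub T U).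
Proof. by move=> HT HU x d Hd; rewrite /opsub HT // HU // subr0. Qed.

Lemma op_on_paths_comp T U : op_on_paths T -> op_on_paths (opcomp T U).
Proof. by move=> HT x d; apply: HT. Qed.

Lemma Sop_linear a : op_linear (Sop a).
Proof. by move=> c x y; apply: funext => d; rewrite /Defs.Sop; case: ifP; rewrite ?mulr0 ?addr0. Qed.

Lemma Sadj_linear a : op_linear (Sadj a).
Proof. by move=> c x y; apply: funext => d; rewrite /Defs.Sadj; case: ifP; rewrite ?mulr0 ?addr0. Qed.

Lemma Sop_ract a : op_ract (Sop a).
Proof. by move=> x f; apply: funext => d; rewrite /Defs.Sop /ract; case: ifP; rewrite ?mul0r. Qed.

Lemma Sadj_ract a : op_ract (Sadj a).
Proof. by move=> x f; apply: funext => d; rewrite /Defs.Sadj /ract; case: ifP; rewrite ?mul0r. Qed.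

Lemma Sop_on_paths a : op_on_paths (Sop a).
Proof. by move=> x d Hd; rewrite /Defs.Sop (negbTE Hd). Qed.

Lemma Sadj_on_paths a : op_on_paths (Sadj a).
Proof. by move=> x d Hd; rewrite /Defs.Sadj (negbTE Hd). Qed.

Lemma op_linear_l2 T : op_linear T -> op_l2_linear T.
Proof. by move=> Tlin c x y _ _; apply: Tlin. Qed.

Lemma op_l2_linear0 T : op_l2_linear T -> T (fun _ => 0) = fun _ => 0.
Proof.
move=> Tlin; have := Tlin (-1) _ _ l2_0 l2_0.
have -> : (fun d : Path => -1 * (0 : C) + 0) = fun _ => 0.
  by apply: funext => d; rewrite mulr0 addr0.
by move=> T0; apply: funext => d; rewrite [in LHS]T0 mulN1r addNr.
Qed.

Lemma op_l2_sum T (I : Type) (r : seq I) (lam : I -> C) (X : I -> Vec) :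
  op_l2_linear T -> (forall j, l2 (X j)) ->
  l2 (fun d => \sum_(j <- r) lam j * X j d) /\
  T (fun d => \sum_(j <- r) lam j * X j d) = fun d => \sum_(j <- r) lam j * T (X j) d.
Proof.
move=> Tlin HX; elim: r => [|j r [IHl IHe]].
  have -> : (fun d => \sum_(j <- [::]) lam j * X j d) = fun _ => 0.
    by apply: funext => d; rewrite big_nil.
  by rewrite op_l2_linear0 //; split; [exact: l2_0 | apply: funext => d; rewrite big_nil].
have -> : (fun d => \sum_(i <- j :: r) lam i * X i d) =
    fun d => lam j * X j d + \sum_(i <- r) lam i * X i d.
  by apply: funext => d; rewrite big_cons.
split; first exact: l2_lin.
by rewrite Tlin // IHe; apply: funext => d; rewrite big_cons.
Qed.

Lemma bounded_op_of T B : op_on_paths T -> op_linear T ->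
  (forall x c, l2le x c -> l2le (T x) (B * c)) -> bounded_op src rg T.
Proof.
move=> T0 Tlin TB; split; [|split].
- by move=> x [_ [c Hc]]; split; [exact: T0 | exists (B * c); apply: TB].
- by move=> c x y _ _; apply: Tlin.
- by exists B => x c _; apply: TB.
Qed.

Lemma finite_rank_below T K : op_on_paths T ->
  (forall x d, (K <= plen d)%N -> T x d = 0) -> finite_rank src rg T.
Proof.
move=> T0 TK; set s := paths_below K.
exists (size s), (fun i => delta (tnth (in_tuple s) i)); split.
  move=> i; apply: l2_delta.
  by have := mem_tnth i (in_tuple s); rewrite mem_paths_below => /andP[].
move=> x _; exists (fun i => T x (tnth (in_tuple s) i)); apply: funext => d.
rewrite -(big_tnth _ _ _ xpredT (fun e => T x e * delta e d)).
case: (boolP (d \in s)) => ds.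
  rewrite (bigD1_seq d) ?uniq_paths_below //= /delta eqxx mulr1 big1 ?addr0 //.
  by move=> e; rewrite eq_sym => /negPf ->; rewrite mulr0.
rewrite big_seq big1 => [|e es]; last first.
  by rewrite /delta; case: eqP => [de|]; [move: ds; rewrite de es | rewrite mulr0].
move: ds; rewrite mem_paths_below negb_and -leqNgt => /orP[/T0 //|]; exact: TK.
Qed.

Definition trunc N x : Vec := fun d => if (plen d < N)%N then x d else 0.

Lemma trunc_linear N : op_linear (trunc N).
Proof. by move=> c x y; apply: funext => d; rewrite /trunc; case: ifP; rewrite ?mulr0 ?addr0. Qed.

Lemma trunc_ract N : op_ract (trunc N).
Proof. by move=> x f; apply: funext => d; rewrite /trunc /ract; case: ifP; rewrite ?mul0r. Qed.

Lemma sqn_trunc N x d : sqn (trunc N x d) <= sqn (x d).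
Proof. by rewrite /trunc; case: ifP; rewrite ?sqn0 ?sqn_ge0. Qed.

Section Shift.
Variable p : nat.
Implicit Types (k m N K : nat).

Definition shifts_degree T := forall k x, homog k x -> homog (k + p) (T x).

Lemma l2le_shift T B : op_on_paths T -> 0 <= B ->
  (forall x K, norm_below K (T x) <= B * norm_below (K + p) x) ->
  forall x c, l2le x c -> l2le (T x) (B * c).
Proof.
move=> T0 B0 TB x c Hx; apply: norm_below_l2le => [d|K]; first exact: T0.
by apply: le_trans (TB x K) _; rewrite ler_wpM2l // l2le_norm_below.
Qed.

(* Truncating the input below degree [N] gives the finite-rank approximant. *)
Lemma compact_shift_op T :
  op_on_paths T -> op_linear T -> op_ract T ->
  (forall N x, (forall d, (N <= plen d)%N -> x d = 0) ->
     forall d, (N + p <= plen d)%N -> T x d = 0) ->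
  (exists2 B, 0 <= B & forall x K, norm_below K (T x) <= B * norm_below (K + p) x) ->
  (forall eps, 0 < eps -> exists N, forall x, (forall d, (plen d < N)%N -> x d = 0) ->
     forall K, norm_below K (T x) <= eps * norm_below (K + p) x) ->
  compact_op src rg T.
Proof.
move=> T0 Tlin Tract Tfin [B B0 TB] Tsmall.
have TBl2 := @l2le_shift T B T0 B0 TB.
split; first exact: (@bounded_op_of T B T0 Tlin TBl2).
move=> eps eps_gt0; have [N HN] := Tsmall eps eps_gt0.
exists (opcomp T (trunc N)); split; [|split; [|split]].
- apply: (@bounded_op_of _ B) => [x d||x c Hx]; first exact: T0.
    exact: (op_linear_comp _ _ Tlin (trunc_linear N)).
  by apply: TBl2; apply: l2le_pointwise Hx => d; apply: sqn_trunc.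
- by move=> x f _; apply: (op_ract_comp _ _ Tract (trunc_ract N)).
- apply: (@finite_rank_below _ (N + p)) => [x d|x]; first exact: T0.
  by apply: Tfin => d Nd; rewrite /trunc ltnNge Nd.
- move=> x c _ Hx.
  have -> : (fun d => T x d - opcomp T (trunc N) x d) = T (fun d => -1 * trunc N x d + x d).
    by rewrite Tlin; apply: funext => d; rewrite mulN1r addrC.
  apply: norm_below_l2le => [d|K]; first exact: T0.
  apply: le_trans (HN _ _ K) _ => [d dN|]; first by rewrite /trunc dN mulN1r addNr.
  rewrite ler_wpM2l ?(ltW eps_gt0) //; apply: le_trans (l2le_norm_below _ _ Hx (K + p)).
  apply: ler_norm_below => d; rewrite /trunc; case: ifP => _.
    by rewrite mulN1r addNr sqn0 sqn_ge0.
  by rewrite mulr0 add0r.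
Qed.

Lemma norm_below_raise f x B K : 0 <= B -> (forall m, (m < p)%N -> knorm m f = 0) ->
  (forall k, knorm (k + p) f <= B * knorm k x) ->
  norm_below K f <= B * norm_below (K + p) x.
Proof.
move=> B0 f_low fB; apply: le_trans (norm_below_homo _ _ f (leq_addr p K)) _.
rewrite norm_below_shift /norm_below big_nat big1 ?add0r => [|m /andP[_]]; last exact: f_low.
apply: le_trans (_ : \sum_(0 <= k < K) B * knorm k x <= _); first exact: ler_sum.
by rewrite -mulr_sumr ler_wpM2l // norm_below_homo ?leq_addr.
Qed.

Lemma norm_below_lower f x B K : 0 <= B ->
  (forall m, knorm m f <= B * knorm (m + p) x) ->
  norm_below K f <= B * norm_below (K + p) x.
Proof.
move=> B0 fB; apply: le_trans (_ : \sum_(0 <= m < K) B * knorm (m + p) x <= _).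
  exact: ler_sum.
rewrite -mulr_sumr ler_wpM2l // norm_below_shift lerDr.
by rewrite sumr_ge0 // => k _; apply: knorm_ge0.
Qed.

(* Were [T] large on [n + 1] vectors of distinct degrees, some nontrivial combination
   [y] of them would be killed by a rank-[n] approximant [F] of [T]; but the degrees
   are orthogonal, so [|T y|^2 = sum |lam_j|^2 |T X_j|^2 > del |y|^2]. *)
Lemma compact_homog_family T del : compact_op src rg T -> 0 < del ->
  shifts_degree T ->
  exists n, forall (e : 'I_n.+1 -> nat) (X : 'I_n.+1 -> Vec),
    injective e -> (forall j, homog (e j) (X j)) ->
    ~ (forall j, del * knorm (e j) (X j) < knorm (e j + p) (T (X j))).
Proof.
move=> [[_ [Tlin _]] Tcpt] del_gt0 Th.
have [F [[_ [Flin _]] [_ [[n [v [_ Fv]]] TF]]]] := Tcpt del del_gt0.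
exists n => e X e_inj HX Xbig.
have l2X j : l2 (X j) by exact: l2_homog _ _ (HX j).
have [cc Hcc] := choice (fun j => Fv (X j) (l2X j)).
have [lam [[j0 lam_j0] Hlam]] := exists_linear_relation _ _ cc.
pose y d := \sum_(j <- index_enum 'I_n.+1) lam j * X j d.
have [l2y Ty] := op_l2_sum T _ (index_enum _) lam X Tlin l2X.
have [_ Fy] := op_l2_sum F _ (index_enum _) lam X Flin l2X.
have Fy0 : F y = fun _ => 0.
  rewrite /y Fy; apply: funext => d.
  under eq_bigr => j _ do rewrite Hcc mulr_sumr.
  rewrite exchange_big big1 // => i _.
  by under eq_bigr => j _ do rewrite mulrA; rewrite -mulr_suml Hlam mul0r.
pose c0 := \sum_j sqn (lam j) * knorm (e j) (X j).
have l2le_y : l2le y c0 := l2le_sum_homog _ _ lam _ e_inj HX.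
have := l2le_norm_below _ _ (TF y c0 l2y l2le_y) (\max_j e j + p).+1.
rewrite Fy0 (_ : (fun d => _) = fun d => \sum_j lam j * T (X j) d); last first.
  by apply: funext => d; rewrite subr0 Ty.
have ep_inj : injective (fun j => e j + p)%N by move=> i j /addIn /e_inj.
rewrite (norm_below_sum_homog _ _ _ _ ep_inj (fun j => homogZ _ (lam j) _ (Th _ _ (HX j)))).
rewrite big_mkcond /= (eq_bigr (fun j => sqn (lam j) * knorm (e j + p) (T (X j)))); last first.
  by move=> j _; rewrite ltnS leq_add2r (@leq_bigmax _ (fun j => e j) j) knormZ.
apply/negP; rewrite -ltNge /c0 mulr_sumr (bigD1 j0) //= [X in _ < X](bigD1 j0) //=.
apply: ltr_leD; first by rewrite mulrCA ltr_pM2l ?Xbig // lt0r sqn_ge0 sqn_eq0 lam_j0.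
by apply: ler_sum => j _; rewrite mulrCA ler_wpM2l ?sqn_ge0 ?(ltW (Xbig j)).
Qed.

Lemma compact_small_homog T : compact_op src rg T -> shifts_degree T ->
  forall del, 0 < del -> exists N, forall k, (N <= k)%N -> forall x, homog k x ->
    knorm (k + p) (T x) <= del * knorm k x.
Proof.
move=> Tc Th del del_gt0; have [n Hn] := compact_homog_family T del Tc del_gt0 Th.
apply: contrapT => /forallNP bad.
have : forall N, exists k, (N <= k)%N /\
    exists x, homog k x /\ del * knorm k x < knorm (k + p) (T x).
  move=> N; apply: contrapT => /forallNP none; apply: (bad N) => k Nk x xk.
  by rewrite leNgt; apply/negP => lt; apply: (none k); split => //; exists x.
case/frequently_inj => e e_inj /choice[X HX].
apply: (Hn (fun j => e j) (fun j => X j)) => [i j /e_inj /val_inj //|j|j]; by case: (HX j).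
Qed.

(** * The commutators of [S_a] and [S_a^*] with [Z] *)

Hypothesis p_gt0 : (0 < p)%N.

Lemma SopE a x d : is_path a -> plen a = p -> is_path d ->
  Sop a x d = if take p d.2 == a.2 then x (pdrop p d) else 0.
Proof.
move=> Ha Hl Hd; rewrite /Defs.Sop Hl Hd /=; case: eqP => //= Ht.
by rewrite -(ptake_path_eq p d a p_gt0 Hd Ha Hl Ht) /ptake /psrc /= eqxx.
Qed.

Lemma Sop_short a x d : is_path a -> plen a = p -> (plen d < p)%N -> Sop a x d = 0.
Proof.
move=> Ha Hl Hs; case: (boolP (is_path d)) => Hd; last exact: Sop_on_paths.
rewrite SopE // (take_oversize (ltnW Hs)).
by case: eqP => // E; move: Hs; rewrite /plen E -/(plen a) Hl ltnn.
Qed.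

Lemma Sop_local a x y k : is_path a -> plen a = p -> {in lpaths k, x =1 y} ->
  {in lpaths (k + p), Sop a x =1 Sop a y}.
Proof.
move=> Ha Hl xy d; rewrite mem_lpaths => /andP[Hd /eqP Hk].
rewrite !SopE //; case: ifP => // _; apply: xy.
by rewrite mem_lpaths is_path_pdrop //= plen_pdrop Hk addnK.
Qed.

Lemma knorm_Sop_le a x k : is_path a -> plen a = p -> knorm (k + p) (Sop a x) <= knorm k x.
Proof.
move=> Ha Hl; rewrite !knormE.
apply: (@ler_sum_inj _ _ _ _ _ (fun d => sqn (Sop a x d)) (pdrop p) (fun g => sqn (x g))).
- exact: uniq_lpaths.
- exact: uniq_lpaths.
- by move=> *; apply: sqn_ge0.
- move=> d; rewrite mem_lpaths => /andP[Hd /eqP Hk].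
  rewrite SopE //; case: (take p d.2 =P a.2) => [_ _|_]; last by rewrite sqn0 eqxx.
  by split; rewrite // mem_lpaths is_path_pdrop //= plen_pdrop Hk addnK.
- move=> d d'; rewrite !mem_filter !mem_lpaths.
  move=> /andP[+ /andP[Hd _]] /andP[+ /andP[Hd' _]]; rewrite !SopE //.
  case: (take p d.2 =P a.2) => [Et|_]; last by rewrite sqn0 eqxx.
  case: (take p d'.2 =P a.2) => [Et' _ _ E|_]; last by rewrite sqn0 eqxx.
  rewrite -(pcat_take_drop p d) -(pcat_take_drop p d') E.
  by rewrite (ptake_path_eq p d a p_gt0 Hd Ha Hl Et) (ptake_path_eq p d' a p_gt0 Hd' Ha Hl Et').
Qed.

Lemma knorm_Sadj_le a x k : is_path a -> plen a = p -> knorm k (Sadj a x) <= knorm (k + p) x.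
Proof.
move=> Ha Hl; rewrite !knormE.
apply: (@ler_sum_inj _ _ _ _ _ (fun d => sqn (Sadj a x d)) (pcat a) (fun g => sqn (x g))).
- exact: uniq_lpaths.
- exact: uniq_lpaths.
- by move=> *; apply: sqn_ge0.
- move=> d; rewrite mem_lpaths => /andP[Hd /eqP Hk].
  rewrite /Defs.Sadj Hd /=; case: (prng d =P psrc a) => [Hr _|_]; last by rewrite sqn0 eqxx.
  by split; rewrite // mem_lpaths is_path_pcat //= plen_pcat Hk Hl addnC.
- by move=> d d' _ _ E; rewrite -(pdrop_pcat p a d Hl) E pdrop_pcat.
Qed.

Definition hpart k x : Vec := fun d => if d \in lpaths k then x d else 0.

Lemma homog_hpart k x : homog k (hpart k x).
Proof. by move=> d Hd; rewrite /hpart (negbTE Hd). Qed.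

Lemma knorm_hpart k x : knorm k (hpart k x) = knorm k x.
Proof. by apply: eq_knorm => d Hd; rewrite /hpart Hd. Qed.

Lemma sum_prefix (V : zmodType) d (F : Path -> V) : is_path d -> (p <= plen d)%N ->
  \sum_(b <- lpaths p) (if take p d.2 == b.2 then F b else 0) = F (ptake p d).
Proof.
move=> Hd Hpd; have Hb : ptake p d \in lpaths p.
  by rewrite mem_lpaths is_path_ptake //= plen_ptake.
rewrite (bigD1_seq (ptake p d)) ?uniq_lpaths //= eqxx big_seq_cond big1 ?addr0 //.
move=> b /andP[]; rewrite mem_lpaths => /andP[Hbp /eqP Hbl] Hne.
by case: eqP => // /(ptake_path_eq p d b p_gt0 Hd Hbp Hbl) Eb; rewrite Eb eqxx in Hne.
Qed.

(* The ranges of the [S_b], [b] of length [p], are orthogonal and cover degree [k + p]. *)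
Lemma sum_knorm_Sadj x k : \sum_(b <- lpaths p) knorm k (Sadj b x) <= knorm (k + p) x.
Proof.
pose xb b : Vec := fun d => if take p d.2 == b.2 then x d else 0.
apply: (@le_trans _ _ (\sum_(b <- lpaths p) knorm (k + p) (xb b))).
  rewrite big_seq [X in _ <= X]big_seq; apply: ler_sum => b.
  rewrite mem_lpaths => /andP[Hb /eqP Hbl].
  rewrite (@eq_knorm k (Sadj b x) (Sadj b (xb b))) ?knorm_Sadj_le //.
  by move=> g _; rewrite /Defs.Sadj /xb /pcat /= take_size_cat ?eqxx.
under eq_bigr => b _ do rewrite knormE.
rewrite knormE exchange_big /= big_seq [X in _ <= X]big_seq; apply: ler_sum => d.
rewrite mem_lpaths => /andP[Hd /eqP Hdl].
rewrite (eq_bigr (fun b => if take p d.2 == b.2 then sqn (x d) else 0)).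
  by rewrite (sum_prefix _ d (fun _ => sqn (x d))) // Hdl leq_addl.
by move=> b _; rewrite /xb; case: ifP; rewrite ?sqn0.
Qed.

Section Weight.
Variable Z : nat -> Path -> Path -> C.
Hypothesis Zw : weight_seq src rg Z.
Local Notation Zop := (Zop src rg Z).
Local Notation wact := (wact src rg).
Local Notation tact := (tact src rg).

(* Commuting with the left action of [C(E^0)] forces [Z_k d g = 0] unless [d] and [g]
   have the same range; adjointability makes [Z_k] a right module map, which does
   the same for sources. *)
Lemma weight_prng k d g : d \in lpaths k -> g \in lpaths k -> prng d != prng g -> Z k d g = 0.
Proof.
case: Zw => _ [Zl _] Hd Hg Hne; move: Hd; rewrite mem_lpaths => /andP[Hd /eqP Hk].
have := Zl k (fun v => if v == prng g then 1 else 0) (delta g) d Hd Hk.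
rewrite /lact !wactE; under eq_bigr do rewrite mulrA.
by rewrite !sum_delta // eqxx (negbTE Hne) mulr1 mul0r.
Qed.

Lemma weight_psrc k d g : d \in lpaths k -> g \in lpaths k -> psrc d != psrc g -> Z k d g = 0.
Proof.
case: Zw => [Zadj _] Hd Hg Hne; have [W HW] := Zadj k.
have := HW (delta g) (delta d) (psrc d); rewrite !kinnerAE.
rewrite (@sum_delta_cond _ _ _ (fun h => conjc (wact Z k (delta g) h))) // eqxx.
rewrite wactE sum_delta //.
under [X in _ = X]eq_bigr do rewrite conjc_delta mulrC.
rewrite (@sum_delta_cond _ _ _ (fun h => wact W k (delta d) h)) //.
by rewrite eq_sym (negbTE Hne) => /eqP; rewrite conjc_eq0 => /eqP.
Qed.

Lemma weight_bounded :
  exists2 M, 0 <= M & forall k x, knorm k (wact Z k x) <= M * knorm k x.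
Proof.
case: Zw => _ [_ [_ [[M HM] _]]]; case: (lerP 0 M) => M0; first by exists M.
exists 0 => // k x; apply: le_trans (HM k x) _.
by rewrite mul0r mulr_le0_ge0 ?knorm_ge0 ?ltW.
Qed.

Lemma ZopE x d : is_path d -> Zop x d = wact Z (plen d) x d.
Proof. by rewrite /Defs.Zop => ->. Qed.

Lemma knorm_Zop k x : knorm k (Zop x) = knorm k (wact Z k x).
Proof. by apply: eq_knorm => d; rewrite mem_lpaths => /andP[Hd /eqP <-]; rewrite ZopE. Qed.

Lemma Zop_linear : op_linear Zop.
Proof.
move=> c x y; apply: funext => d; rewrite /Defs.Zop; case: ifP; rewrite ?mulr0 ?addr0 // => _.
by rewrite !wactE mulr_sumr -big_split; apply: eq_bigr => g _; rewrite mulrDr mulrCA.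
Qed.

Lemma Zop_ract : op_ract Zop.
Proof.
move=> x f; apply: funext => d; rewrite /Defs.Zop /ract.
case: ifP => Hd; last by rewrite mul0r.
rewrite !wactE mulr_suml; apply: eq_big_seq => g Hg.
case: (psrc g =P psrc d) => [->|Hne]; first by rewrite mulrA.
rewrite weight_psrc ?mul0r //; first by rewrite mem_lpaths Hd /=.
by rewrite eq_sym; apply/eqP.
Qed.

Lemma Zop_on_paths : op_on_paths Zop.
Proof. by move=> x d Hd; rewrite /Defs.Zop (negbTE Hd). Qed.

Definition commS a : Op := opsub (opcomp (Sop a) Zop) (opcomp Zop (Sop a)).
Definition commSadj a : Op := opsub (opcomp (Sadj a) Zop) (opcomp Zop (Sadj a)).

Lemma commS_on_paths a : op_on_paths (commS a).
Proof. by apply: op_on_paths_sub; apply: op_on_paths_comp; [exact: Sop_on_paths | exact: Zop_on_paths]. Qed.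

Lemma commS_linear a : op_linear (commS a).
Proof. by apply: op_linear_sub; apply: op_linear_comp; (exact: Sop_linear || exact: Zop_linear). Qed.

Lemma commS_ract a : op_ract (commS a).
Proof. by apply: op_ract_sub; apply: op_ract_comp; (exact: Sop_ract || exact: Zop_ract). Qed.

Lemma commSadj_on_paths a : op_on_paths (commSadj a).
Proof. by apply: op_on_paths_sub; apply: op_on_paths_comp; [exact: Sadj_on_paths | exact: Zop_on_paths]. Qed.

Lemma commSadj_linear a : op_linear (commSadj a).
Proof. by apply: op_linear_sub; apply: op_linear_comp; (exact: Sadj_linear || exact: Zop_linear). Qed.

Lemma commSadj_ract a : op_ract (commSadj a).
Proof. by apply: op_ract_sub; apply: op_ract_comp; (exact: Sadj_ract || exact: Zop_ract). Qed.

Lemma commS_low a x d : is_path a -> plen a = p -> (plen d < p)%N -> commS a x d = 0.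
Proof.
move=> Ha Hl Hs; case: (boolP (is_path d)) => Hd; last exact: commS_on_paths.
rewrite /commS /opsub /opcomp Sop_short // ZopE // wact_eq0 ?subr0 // => g.
by rewrite mem_lpaths => /andP[_ /eqP Hg]; rewrite Sop_short ?Hg.
Qed.

Lemma commS_local a x y k : is_path a -> plen a = p -> {in lpaths k, x =1 y} ->
  {in lpaths (k + p), commS a x =1 commS a y}.
Proof.
move=> Ha Hl xy d Hd; move: (Hd); rewrite mem_lpaths => /andP[Hdp /eqP Hk].
rewrite /commS /opsub /opcomp !SopE // !(ZopE _ d) // Hk.
congr (_ - _); last by apply: eq_wact; apply: Sop_local.
case: ifP => // _; rewrite !ZopE ?is_path_pdrop // plen_pdrop Hk addnK.
exact: eq_wact.
Qed.

Lemma commS_vanish a N x : is_path a -> plen a = p ->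
  (forall d, (N <= plen d)%N -> x d = 0) -> forall d, (N + p <= plen d)%N -> commS a x d = 0.
Proof.
move=> Ha Hl xN d Hd; case: (boolP (is_path d)) => Hdp; last exact: commS_on_paths.
have Hm : d \in lpaths (plen d - p + p) by rewrite subnK ?mem_lpaths ?Hdp ?eqxx //; lia.
rewrite (commS_local a x (fun _ => 0) _ Ha Hl _ d Hm) ?(op_l2_linear0 _ (op_linear_l2 _ (commS_linear a))) //.
by move=> g; rewrite mem_lpaths => /andP[_ /eqP Hg]; apply: xN; lia.
Qed.

Lemma commS_shifts a : is_path a -> plen a = p -> shifts_degree (commS a).
Proof.
move=> Ha Hl k x xk d Hd.
case: (boolP (is_path d)) => Hdp; last exact: commS_on_paths.
case: (ltnP (plen d) p) => Hs; first exact: commS_low.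
have Hm : d \in lpaths (plen d - p + p) by rewrite subnK // mem_lpaths Hdp /=.
rewrite (commS_local a x (fun _ => 0) _ Ha Hl _ d Hm) ?(op_l2_linear0 _ (op_linear_l2 _ (commS_linear a))) //.
move=> g; rewrite mem_lpaths => /andP[_ /eqP Hg]; apply: xk; move: Hd; apply: contraNN.
by rewrite !mem_lpaths Hdp => /andP[_ /eqP Hgk]; apply/eqP; lia.
Qed.

Lemma Sop_Zop a x k d : is_path a -> plen a = p -> d \in lpaths (k + p) ->
  Sop a (Zop x) d = tact Z p k (Sop a x) d.
Proof.
move=> Ha Hl; rewrite mem_lpaths => /andP[Hd /eqP Hk].
have Htk : plen (ptake p d) = p by rewrite plen_ptake // Hk leq_addl.
have Sop_pcat g : g \in lpaths k -> prng g == prng (pdrop p d) ->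
    Sop a x (pcat (ptake p d) g) = if take p d.2 == a.2 then x g else 0.
  rewrite mem_lpaths => /andP[Hg _] /eqP Hgr.
  rewrite SopE ?is_path_pcat ?is_path_ptake // pdrop_pcat //.
  by rewrite /pcat /= take_size_cat.
rewrite SopE // tactE big_seq_cond.
under eq_bigr => g /andP[Hg Hr] do rewrite Sop_pcat //.
rewrite -big_seq_cond; case: ifP => _; last by rewrite big1 // => g _; rewrite mulr0.
rewrite ZopE ?is_path_pdrop // plen_pdrop Hk addnK wactE.
rewrite [in RHS]big_mkcond /=; apply: eq_big_seq => g Hg.
case: eqP => // Hne; rewrite weight_prng ?mul0r //.
  by rewrite mem_lpaths is_path_pdrop //= plen_pdrop Hk addnK.
by rewrite eq_sym; apply/eqP.
Qed.

Lemma commS_tact a x k d : is_path a -> plen a = p -> d \in lpaths (k + p) ->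
  commS a x d = tact Z p k (Sop a x) d - wact Z (k + p) (Sop a x) d.
Proof.
move=> Ha Hl Hd; rewrite /commS /opsub /opcomp (Sop_Zop _ _ k) //.
by move: Hd; rewrite mem_lpaths => /andP[Hd /eqP Hk]; rewrite ZopE // Hk.
Qed.

Lemma commS_bound M a x k : 0 <= M ->
  (forall k x, knorm k (wact Z k x) <= M * knorm k x) -> is_path a -> plen a = p ->
  knorm (k + p) (commS a x) <= 2 * (M + M) * knorm k x.
Proof.
move=> M0 HM Ha Hl; rewrite /commS /opsub /opcomp.
apply: le_trans (knormB _ _ _) _; rewrite -mulrA ler_wpM2l // mulrDl lerD //.
  by apply: le_trans (knorm_Sop_le _ _ _ Ha Hl) _; rewrite knorm_Zop HM.
by rewrite knorm_Zop; apply: le_trans (HM _ _) _; rewrite ler_wpM2l ?knorm_Sop_le.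
Qed.

Lemma commSadj_vanish a N x : is_path a -> plen a = p ->
  (forall d, (N <= plen d)%N -> x d = 0) -> forall d, (N + p <= plen d)%N -> commSadj a x d = 0.
Proof.
move=> Ha Hl xN d Hd; case: (boolP (is_path d)) => Hdp; last exact: commSadj_on_paths.
rewrite /commSadj /opsub /opcomp [Zop (Sadj a x) d]ZopE // wact_eq0; last first.
  move=> g; rewrite mem_lpaths => /andP[_ /eqP Hg].
  by rewrite /Defs.Sadj; case: ifP => // _; apply: xN; rewrite plen_pcat Hg; lia.
rewrite subr0 /Defs.Sadj Hdp /=; case: ifP => // _.
rewrite /Defs.Zop; case: ifP => // _; apply: wact_eq0 => g.
by rewrite mem_lpaths plen_pcat => /andP[_ /eqP Hg]; apply: xN; rewrite Hg; lia.
Qed.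

Lemma commSadj_tact a x m g : is_path a -> plen a = p -> g \in lpaths m ->
  commSadj a x g = Sadj a (fun d => wact Z (m + p) x d - tact Z p m x d) g.
Proof.
move=> Ha Hl Hgm; move: (Hgm); rewrite mem_lpaths => /andP[Hg /eqP Hm].
have Zop_Sadj : Zop (Sadj a x) g = if prng g == psrc a then
    \sum_(h <- lpaths m | prng h == prng g) Z m g h * x (pcat a h) else 0.
  rewrite ZopE // Hm wactE; case: (prng g =P psrc a) => Hr.
    rewrite [RHS]big_mkcond; apply: eq_big_seq => h Hh.
    move: (Hh); rewrite mem_lpaths => /andP[Hhp _]; rewrite /Defs.Sadj Hhp /=.
    case: (prng h =P prng g) => [-> | Hhg]; first by rewrite Hr eqxx.
    by rewrite weight_prng ?mul0r //; apply/eqP => E; apply: Hhg.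
  rewrite big_seq big1 // => h Hh.
  rewrite /Defs.Sadj; case: ifP => [/andP[_ /eqP Hha]|_]; last by rewrite mulr0.
  by rewrite weight_prng ?mul0r //; apply/eqP => E; apply: Hr; rewrite E Hha.
rewrite /commSadj /opsub /opcomp Zop_Sadj /Defs.Sadj Hg /=.
case: (prng g =P psrc a) => Hr /=; last by rewrite subr0.
rewrite tactE pdrop_pcat // ptake_pcat // ZopE ?is_path_pcat //.
by rewrite plen_pcat Hm Hl addnC.
Qed.

Lemma commSadj_bound M a x m : 0 <= M ->
  (forall k x, knorm k (wact Z k x) <= M * knorm k x) -> is_path a -> plen a = p ->
  knorm m (commSadj a x) <= 2 * (M + M) * knorm (m + p) x.
Proof.
move=> M0 HM Ha Hl; rewrite /commSadj /opsub /opcomp.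
apply: le_trans (knormB _ _ _) _; rewrite -mulrA ler_wpM2l // mulrDl lerD //.
  by apply: le_trans (knorm_Sadj_le _ _ _ Ha Hl) _; rewrite knorm_Zop HM.
by rewrite knorm_Zop; apply: le_trans (HM _ _) _; rewrite ler_wpM2l ?knorm_Sadj_le.
Qed.

Lemma condA_compact_commS a : is_path a -> plen a = p ->
  condA src rg Z p -> compact_op src rg (commS a).
Proof.
move=> Ha Hl HA; have [M M0 HM] := weight_bounded.
have B0 : 0 <= 2 * (M + M) by rewrite mulr_ge0 // addr_ge0.
have commS_lowE m x : (m < p)%N -> knorm m (commS a x) = 0.
  move=> mp; apply: knorm_eq0 => d; rewrite mem_lpaths => /andP[_ /eqP dm].
  by apply: commS_low; rewrite ?dm.
apply: compact_shift_op.
- exact: commS_on_paths.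
- exact: commS_linear.
- exact: commS_ract.
- by move=> N x; apply: commS_vanish.
- exists (2 * (M + M)) => // x K.
  by apply: norm_below_raise => // [m|k]; [apply: commS_lowE | apply: commS_bound].
move=> eps eps_gt0; have [N HN] := HA eps eps_gt0.
exists N => x xN K; apply: norm_below_raise => [|m|k]; [exact: ltW | exact: commS_lowE |].
case: (leqP N k) => Nk.
  rewrite (eq_knorm _ _ (fun d => tact Z p k (Sop a x) d - wact Z (k + p) (Sop a x) d)).
    by apply: le_trans (HN k Nk (Sop a x)) _; rewrite ler_wpM2l ?(ltW eps_gt0) ?knorm_Sop_le.
  by move=> d Hd; apply: commS_tact.
have x0 : knorm k x = 0.
  by apply: knorm_eq0 => d; rewrite mem_lpaths => /andP[_ /eqP dk]; apply: xN; rewrite dk.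
by apply: le_trans (commS_bound _ _ _ k M0 HM Ha Hl) _; rewrite x0 !mulr0.
Qed.

Lemma condA_compact_commSadj a : is_path a -> plen a = p ->
  condA src rg Z p -> compact_op src rg (commSadj a).
Proof.
move=> Ha Hl HA; have [M M0 HM] := weight_bounded.
have B0 : 0 <= 2 * (M + M) by rewrite mulr_ge0 // addr_ge0.
apply: compact_shift_op.
- exact: commSadj_on_paths.
- exact: commSadj_linear.
- exact: commSadj_ract.
- by move=> N x; apply: commSadj_vanish.
- exists (2 * (M + M)) => // x K.
  by apply: norm_below_lower => // m; apply: commSadj_bound.
move=> eps eps_gt0; have [N HN] := HA eps eps_gt0.
exists (N + p)%N => x xN K; apply: norm_below_lower => [|m]; first exact: ltW.
case: (leqP N m) => Nm.
  rewrite (eq_knorm _ _ (Sadj a (fun d => wact Z (m + p) x d - tact Z p m x d))).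
    by apply: le_trans (knorm_Sadj_le _ _ _ Ha Hl) _; rewrite knorm_subC HN.
  by move=> d Hd; apply: commSadj_tact.
have x0 : knorm (m + p) x = 0.
  apply: knorm_eq0 => d; rewrite mem_lpaths => /andP[_ /eqP dm]; apply: xN.
  by rewrite dm ltn_add2r.
by apply: le_trans (commSadj_bound _ _ _ m M0 HM Ha Hl) _; rewrite x0 !mulr0.
Qed.

Lemma compact_commS_small a : is_path a -> plen a = p -> compact_op src rg (commS a) ->
  forall del, 0 < del -> exists N, forall k, (N <= k)%N -> forall x,
    knorm (k + p) (commS a x) <= del * knorm k x.
Proof.
move=> Ha Hl Hc del del_gt0.
have [N HN] := compact_small_homog _ Hc (commS_shifts a Ha Hl) del del_gt0.
exists N => k Hk x; rewrite -(knorm_hpart k x) (eq_knorm _ _ (commS a (hpart k x))).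
  exact: HN (homog_hpart k x).
by apply: commS_local => // g Hg; rewrite /hpart Hg.
Qed.

Lemma tact_sub_wact_sum_commS x k d : d \in lpaths (k + p) ->
  tact Z p k x d - wact Z (k + p) x d =
  \sum_(b <- lpaths p) commS b (hpart k (Sadj b x)) d.
Proof.
move=> Hd; move: (Hd); rewrite mem_lpaths => /andP[Hdp /eqP Hdl].
have Hpd : (p <= plen d)%N by rewrite Hdl leq_addl.
rewrite /commS /opsub /opcomp sumrB; congr (_ - _).
  rewrite (eq_big_seq (fun b => if take p d.2 == b.2
      then Zop (hpart k (Sadj b x)) (pdrop p d) else 0)); last first.
    by move=> b; rewrite mem_lpaths => /andP[Hb /eqP Hbl]; rewrite SopE.
  rewrite (sum_prefix _ d (fun b => Zop (hpart k (Sadj b x)) (pdrop p d))) //.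
  rewrite ZopE ?is_path_pdrop // plen_pdrop Hdl addnK wactE tactE.
  rewrite [LHS]big_mkcond; apply: eq_big_seq => g Hg.
  move: (Hg); rewrite mem_lpaths => /andP[Hgp _].
  by rewrite /hpart Hg /Defs.Sadj Hgp /=; case: ifP; rewrite ?mulr0.
have sum_Sop_Sadj g : g \in lpaths (k + p) ->
    \sum_(b <- lpaths p) Sop b (hpart k (Sadj b x)) g = x g.
  move=> Hg; move: (Hg); rewrite mem_lpaths => /andP[Hgp /eqP Hgl].
  rewrite (eq_big_seq (fun b => if take p g.2 == b.2
      then hpart k (Sadj b x) (pdrop p g) else 0)); last first.
    by move=> b; rewrite mem_lpaths => /andP[Hb /eqP Hbl]; rewrite SopE.
  rewrite (sum_prefix _ g (fun b => hpart k (Sadj b x) (pdrop p g))) ?Hgl ?leq_addl //.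
  rewrite /hpart mem_lpaths is_path_pdrop //= plen_pdrop Hgl addnK eqxx.
  by rewrite /Defs.Sadj is_path_pdrop //= /psrc /ptake /= eqxx pcat_take_drop.
rewrite (eq_big_seq (fun b => wact Z (k + p) (Sop b (hpart k (Sadj b x))) d)); last first.
  by move=> b _; rewrite ZopE // Hdl.
under eq_bigr do rewrite wactE.
by rewrite exchange_big wactE; apply: eq_big_seq => g Hg; rewrite -mulr_sumr sum_Sop_Sadj.
Qed.

Lemma compact_commS_condA :
  (forall a, is_path a -> plen a = p -> compact_op src rg (commS a)) -> condA src rg Z p.
Proof.
move=> Hc eps eps_gt0; pose P := size (lpaths p).
have P_gt0 : 0 < (2 : R) ^+ P by rewrite exprn_gt0.
pose del := eps / 2 ^+ P.
have del_gt0 : 0 < del by rewrite divr_gt0.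
have [N HN] : exists N, forall b, b \in lpaths p -> forall k, (N <= k)%N ->
    forall x, knorm (k + p) (commS b x) <= del * knorm k x.
  apply: eventually_all => b; rewrite mem_lpaths => /andP[Hb /eqP Hbl].
  exact: compact_commS_small Hb Hbl (Hc b Hb Hbl) del del_gt0.
exists N => k Nk x.
rewrite (eq_knorm _ _ (fun d => \sum_(b <- lpaths p) commS b (hpart k (Sadj b x)) d)); last first.
  by move=> d Hd; apply: tact_sub_wact_sum_commS.
rewrite knormE; apply: (@le_trans _ _ (\sum_(d <- lpaths (k + p)) 2 ^+ P *
    \sum_(b <- lpaths p) sqn (commS b (hpart k (Sadj b x)) d))).
  by apply: ler_sum => d _; apply: ler_sqn_sum.
rewrite -mulr_sumr exchange_big /=.
apply: (@le_trans _ _ (2 ^+ P * \sum_(b <- lpaths p) del * knorm k (Sadj b x))).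
  rewrite ler_wpM2l ?(ltW P_gt0) // big_seq [X in _ <= X]big_seq; apply: ler_sum => b Hb.
  by rewrite -(knorm_hpart k (Sadj b x)) -knormE HN.
rewrite -mulr_sumr mulrA (_ : 2 ^+ P * del = eps); last by rewrite mulrC divfK ?gt_eqF.
by rewrite ler_wpM2l ?(ltW eps_gt0) ?sum_knorm_Sadj.
Qed.

End Weight.
End Shift.
End Fock.

Theorem mainTheorem5 (R : realType) (E0 E1 : finType) (src rg : E1 -> E0)
    (Z : nat -> Path E0 E1 -> Path E0 E1 -> R[i]) (p : nat) :
  no_sinks src ->
  weight_seq src rg Z ->
  (1 <= p)%N ->
  (condA src rg Z p <->
     (forall a : Path E0 E1, is_path src rg a -> plen a = p ->
        eq_modK src rg (opcomp (Sop src rg a) (Zop src rg Z))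
                       (opcomp (Zop src rg Z) (Sop src rg a))))
  /\ (condA src rg Z p ->
     (forall a : Path E0 E1, is_path src rg a -> plen a = p ->
        eq_modK src rg (opcomp (Sadj src rg a) (Zop src rg Z))
                       (opcomp (Zop src rg Z) (Sadj src rg a)))).
Proof.
move=> _ Zw p_gt0; split; first split.
- move=> HA a Ha Hl; exact: (condA_compact_commS _ _ _ _ _ _ p_gt0 _ Zw _ Ha Hl HA).
- move=> Hc; exact: (compact_commS_condA _ _ _ _ _ _ p_gt0 _ Hc).
- move=> HA a Ha Hl; exact: (condA_compact_commSadj _ _ _ _ _ _ p_gt0 _ Zw _ Ha Hl HA).
Qed.
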